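(* Let $Q$ be a tree quiver, let $(M,x)$ be a radiation module with $M$ exceptional, and let $\mathcal B=\mathcal B(M,x)$ be a radiation basis. Let $\alpha$ be an arrow of $Q$ connecting vertices $y$ and $z$ with $\dim M_y=\dim M_z$. Then, for suitable orderings of the bases $\mathcal B_y$ and $\mathcal B_z$, the matrix of $M_\alpha$ with respect to these bases is the identity matrix.
   Context: $k$ is a field; $Q$ is a locally finite quiver whose underlying graph is a tree; representations are finite-dimensional; $M$ exceptional means indecomposable with $\operatorname{Ext}^1(M,M)=0$. $S(x)$ is the simple at $x$; $Q^x$ is $Q$ with $x$ and its arrows deleted; restriction to $Q^x$ forgets $M_x$ and maps at $x$. Radiation modules (recursive): pairs $(M,x)$, $M$ indecomposable, $\dim M_x=1$; $(S(x),x)$ is one; if $M$ has length $\ge2$, $(M,x)$ is one if the restriction of $M$ to $Q^x$ is $\bigoplus_iN(i)$, $N(i)$ indecomposable, $\operatorname{Hom}(N(i),N(j))=0$ for $i\ne j$, with neighbors $y(i)$ of $x$ such that $(N(i),y(i))$ are radiation modules. Radiation basis containing nonzero $b\in M_x$ (recursive): $\{b\}$ for $S(x)$; otherwise, with $\alpha_i$ the arrow between $x$ and $y(i)$, let $b_i$ be the $N(i)_{y(i)}$-component of $M_{\alpha_i}(b)$ (with respect to $M_{y(i)}=\bigoplus_jN(j)_{y(i)}$) if $\alpha_i\colon x\to y(i)$, and the element of $N(i)_{y(i)}$ with $M_{\alpha_i}(b_i)=b$ if $\alpha_i\colon y(i)\to x$; $\mathcal B(M,x)=\{b\}\cup\bigcup_i\mathcal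 B(N(i),y(i))$ with $\mathcal B(N(i),y(i))$ a radiation basis of $(N(i),y(i))$ containing $b_i$. $\mathcal B_z$ denotes the elements of $\mathcal B$ in $M_z$. *)

(* Quiver representations over a field K, with the vector
   space at a vertex v being K^(rdim v), realised as row vectors 'rV_(rdim v);
   the map of an arrow a : v -> w acts on row vectors by u |-> u *m rmap a. *)
From HB Require Import structures.
From mathcomp Require Import all_boot all_order all_algebra.
From Stdlib Require List.
Set Implicit Arguments. Unset Strict Implicit. Unset Printing Implicit Defensive.
Import GRing.Theory.
Local Open Scope ring_scope.

Record quiver := Quiver {
  vertex : Type;
  arrow : Type;
  src : arrow -> vertex;
  tgt : arrow -> vertex }.

(* Underlying graph: an undirected walk is a list of steps (a, true) traversing
   arrow a from src to tgt, or (a, false) traversing it from tgt to src. *)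
Inductive walk (Q : quiver) : vertex Q -> vertex Q -> list (arrow Q * bool) -> Prop :=
| walk_nil v : walk v v nil
| walk_cons u w (a : arrow Q) (dir : bool) l :
    (if dir then src a else tgt a) = u ->
    walk (if dir then tgt a else src a) w l ->
    walk u w ((a, dir) :: l).

Fixpoint reduced (Q : quiver) (l : list (arrow Q * bool)) : Prop :=
  match l with
  | s1 :: ((s2 :: _) as l') => s1.1 <> s2.1 /\ reduced l'
  | _ => True
  end.

(* The underlying (multi)graph is a tree: between any two vertices there is
   exactly one reduced walk (this excludes loops, multiple edges, cycles, and
   forces connectedness). *)
Definition is_tree (Q : quiver) : Prop :=
  forall u w : vertex Q, exists! l, walk u w l /\ reduced l.

Definition locally_finite (Q : quiver) : Prop :=
  forall v : vertex Q, exists l : list (arrow Q),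
    forall a, src a = v \/ tgt a = v -> List.In a l.

Record rep (K : fieldType) (Q : quiver) := Rep {
  rdim : vertex Q -> nat;
  rmap : forall a : arrow Q, 'M[K]_(rdim (src a), rdim (tgt a)) }.

Section Reps.
Variables (K : fieldType) (Q : quiver) (M : rep K Q).
Local Notation d := (rdim M).
Local Notation A := (rmap M).

Definition finite_dim : Prop :=
  exists l : list (vertex Q), forall v, (0 < d v)%N -> List.In v l.

(* A family of subspaces U v <= K^(d v) (row spaces of the matrices U v). *)
Definition family := forall v : vertex Q, 'M[K]_(d v).

Definition in_sub (T : vertex Q -> Prop) (a : arrow Q) := T (src a) /\ T (tgt a).

(* (T, U) is a subrepresentation of the restriction of M to the full subquiver
   on T: U vanishes outside T and is stable under the arrows inside T. *)
Definition is_piece (T : vertex Q -> Prop) (U : family) : Prop :=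
  (forall v, ~ T v -> (U v == (0 : 'M_(d v)))%MS) /\
  (forall a, in_sub T a -> (U (src a) *m A a <= U (tgt a))%MS).

Definition subpiece T (U W : family) : Prop :=
  is_piece T W /\ forall v, (W v <= U v)%MS.

Definition piece_zero (U : family) : Prop := forall v, (U v == (0 : 'M_(d v)))%MS.

Definition indecomposable_piece T (U : family) : Prop :=
  is_piece T U /\ ~ piece_zero U /\
  forall W1 W2, subpiece T U W1 -> subpiece T U W2 ->
    (forall v, (W1 v + W2 v == U v)%MS /\ ((W1 v :&: W2 v) == (0 : 'M_(d v)))%MS) ->
    piece_zero W1 \/ piece_zero W2.

(* Hom((T,U1),(T,U2)) = 0: every family of linear maps U1 v -> U2 v (given by
   matrices F v, restricted to U1 v) commuting with the arrows of the
   subquiver is zero. *)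
Definition hom_zero T (U1 U2 : family) : Prop :=
  forall F : family,
    (forall v, (U1 v *m F v <= U2 v)%MS) ->
    (forall a, in_sub T a -> forall u : 'rV[K]_(d (src a)),
        (u <= U1 (src a))%MS -> u *m A a *m F (tgt a) = u *m F (src a) *m A a) ->
    forall v, U1 v *m F v = 0.

Definition all_vertices : vertex Q -> Prop := fun _ => True.
Definition full_family : family := fun v => 1%:M.

Definition indecomposable : Prop := indecomposable_piece all_vertices full_family.

(* Ext^1(M,M) = 0, with Ext^1 the cokernel of the standard map
   (f_v)_v |-> (M_a f_{ta} - f_{sa} M_a)_a  (Ringel's exact sequence). *)
Definition ext1_self_zero : Prop :=
  forall G : forall a : arrow Q, 'M[K]_(d (src a), d (tgt a)),
  exists F : family, forall a, G a = A a *m F (tgt a) - F (src a) *m A a.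

Definition exceptional : Prop := indecomposable /\ ext1_self_zero.

Definition elt := {v : vertex Q & 'rV[K]_(d v)}.

Definition remove_vertex (T : vertex Q -> Prop) (x : vertex Q) : vertex Q -> Prop :=
  fun v => T v /\ v <> x.

(* rad_basis T U x b B : (T,U) (a representation of the full subquiver on T,
   sitting inside M) together with x is a radiation module, and B is a
   radiation basis of it containing the nonzero vector b of its space at x,
   built from the chosen decompositions.  The restriction to Q^x is decomposed
   as an internal direct sum of the N i; al i is the arrow between x and the
   neighbour y(i) = projT1 (bs i), and projT2 (bs i) is the vector b_i. *)
Inductive rad_basis : (vertex Q -> Prop) -> family ->
    forall x : vertex Q, 'rV[K]_(d x) -> (elt -> Prop) -> Prop :=
| rad_simple (T : vertex Q -> Prop) (U : family) (x : vertex Q)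
    (b : 'rV[K]_(d x)) (B : elt -> Prop) :
    T x -> is_piece T U ->
    \rank (U x) = 1%N -> (forall v, v <> x -> (U v == (0 : 'M_(d v)))%MS) ->
    b != 0 -> (b <= U x)%MS ->
    (forall p, B p <-> p = existT (fun v => 'rV[K]_(d v)) x b) ->
    @rad_basis T U x b B
| rad_step (T : vertex Q -> Prop) (U : family) (x : vertex Q)
    (b : 'rV[K]_(d x)) (B : elt -> Prop) (n : nat) (N : 'I_n -> family) (al : 'I_n -> arrow Q)
    (bs : 'I_n -> elt) (Bs : 'I_n -> elt -> Prop) :
    T x -> indecomposable_piece T U ->
    \rank (U x) = 1%N ->
    (exists v, v <> x /\ ~~ (U v == (0 : 'M_(d v)))%MS) ->  (* length >= 2 *)
    b != 0 -> (b <= U x)%MS ->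
    (forall i, is_piece (remove_vertex T x) (N i)) ->
    (forall v, remove_vertex T x v ->
       (\sum_i N i v == U v)%MS /\ mxdirect (\sum_i N i v)) ->
    (forall i, indecomposable_piece (remove_vertex T x) (N i)) ->
    (forall i j, i != j -> hom_zero (remove_vertex T x) (N i) (N j)) ->
    (forall i,
      (src (al i) = x /\
        exists u : 'rV[K]_(d (src (al i))),
          existT _ (src (al i)) u = existT (fun v => 'rV[K]_(d v)) x b /\
          exists w : 'rV[K]_(d (tgt (al i))),
            existT _ (tgt (al i)) w = bs i /\
            (w <= N i (tgt (al i)))%MS /\
            (u *m A (al i) - w <= \sum_(j | j != i) N j (tgt (al i)))%MS)
      \/
      (tgt (al i) = x /\
        exists u : 'rV[K]_(d (tgt (al i))),
          existT _ (tgt (al i)) u = existT (fun v => 'rV[K]_(d v)) x b /\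
          exists w : 'rV[K]_(d (src (al i))),
            existT _ (src (al i)) w = bs i /\
            (w <= N i (src (al i)))%MS /\ w *m A (al i) = u /\
            (forall w' : 'rV[K]_(d (src (al i))),
               (w' <= N i (src (al i)))%MS -> w' *m A (al i) = u -> w' = w))) ->
    (forall i, @rad_basis (remove_vertex T x) (N i) (projT1 (bs i)) (projT2 (bs i)) (Bs i)) ->
    (forall p, B p <-> p = existT (fun v => 'rV[K]_(d v)) x b \/ exists i, Bs i p) ->
    @rad_basis T U x b B.

Definition radiation_basis (x : vertex Q) (B : elt -> Prop) : Prop :=
  exists b : 'rV[K]_(d x), @rad_basis all_vertices full_family x b B.

Definition ordered_basis_of (B : elt -> Prop) (v : vertex Q) (n : nat)
    (E : 'M[K]_(n, d v)) : Prop :=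
  row_free E /\ row_full E /\
  forall u : 'rV[K]_(d v), B (existT _ v u) <-> exists i, row i E = u.

End Reps.

Arguments finite_dim {K Q} M.
Arguments exceptional {K Q} M.
Arguments elt {K Q} M.
Arguments radiation_basis {K Q} M x B.
Arguments ordered_basis_of {K Q} M B v {n} E.

(* - Tree combinatorics: after deleting a vertex c, the vertices reached from
     c through a fixed arrow form a union of components, so an indecomposable
     piece of the remaining subquiver meets the neighbours of c through at most
     one arrow (indecomposable_one_arrow).
   - Ext^1(M, M) = 0 forces every arrow map to be injective or surjective; with
     equal dimensions M_al is bijective (ext1_zero_square_free).
   - Main induction on radiation bases (rb_carried): if M_al maps U_s onto U_t,
     then M_al restricts to a bijection B_s -> B_t.  When al touches the centre
     this follows from the previous point and the defining property of the
     vectors b_i; otherwise a dimension count shows that al maps each branch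
     onto its counterpart, and the induction hypothesis applies.
   - A second induction shows that B_v lists a basis of M_v (rb_lists_basis).
     Listing B_s as the rows of E, the rows of E *m M_al then list B_t, which is
     the statement. *)
From Pilot Require Import Defs.
From HB Require Import structures.
From mathcomp Require Import all_boot all_order all_algebra.
From Stdlib Require Import ClassicalEpsilon Classical Eqdep.
Set Implicit Arguments. Unset Strict Implicit. Unset Printing Implicit Defensive.
Import GRing.Theory.
Local Open Scope ring_scope.

Section Walks.
Variable Q : quiver.

Definition joins (a : arrow Q) (dir : bool) (u w : vertex Q) : Prop :=
  (if dir then src a else tgt a) = u /\ (if dir then tgt a else src a) = w.

Lemma walk1 a dir (u w : vertex Q) : joins a dir u w -> walk u w [:: (a, dir)].
Proof. by case=> hu hw; constructor => //; rewrite hw; constructor. Qed.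

Lemma walk_consE (u z : vertex Q) p l :
  walk u z (p :: l) -> joins p.1 p.2 u (if p.2 then tgt p.1 else src p.1) /\
     walk (if p.2 then tgt p.1 else src p.1) z l.
Proof. by move=> h; inversion h; subst. Qed.

Lemma walk_nilE (u z : vertex Q) : walk u z [::] -> u = z.
Proof. by move=> h; inversion h. Qed.

Lemma walk_rcons (u w z : vertex Q) l r :
  walk u w l -> walk w z [:: r] -> walk u z (rcons l r).
Proof. by elim=> [//|u' w' a dir l' e _ IH] /IH; apply: walk_cons. Qed.

Lemma walk_rconsE (u z : vertex Q) l r :
  walk u z (rcons l r) -> exists w, walk u w l /\ walk w z [:: r].
Proof.
elim: l u => [|[a dir] l IH] u /=; first by exists u; split => //; constructor.
move=> /walk_consE [[e _] /IH [w [h1 h2]]].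
by exists w; split => //; constructor.
Qed.

Lemma reduced_rcons (p r : arrow Q * bool) l :
  reduced (p :: l) -> (last p l).1 <> r.1 -> reduced (rcons (p :: l) r).
Proof.
elim: l p => [|q l IH] p /=; first by move=> _ h; split.
by move=> [h1 h2] h; split => //; apply: IH.
Qed.

Lemma reduced_belast (p r : arrow Q * bool) l :
  reduced (rcons (p :: l) r) -> reduced (p :: l).
Proof.
elim: l p => [|q l IH] p //=.
by move=> [h1 h2]; split => //; apply: IH.
Qed.

(* [branch c a v]: [v] is reached from [c] by a reduced walk whose first
   step is along [a]; in a tree these are the vertices of the component of
   [Q] minus [c] entered through [a]. *)
Definition branch (c : vertex Q) (a : arrow Q) (v : vertex Q) : Prop :=
  exists p l, walk c v (p :: l) /\ reduced (p :: l) /\ p.1 = a.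

(* A branch is closed under steps avoiding its root: either the step extends
   the reduced walk, or it backtracks along its last arrow. *)
Lemma branch_step c a u w (b : arrow Q) (dir : bool) :
  branch c a u -> joins b dir u w -> w <> c -> branch c a w.
Proof.
move=> hbu [hu hwe] hwc; have [p [l [hw [hr ha]]]] := hbu.
have [hl|hl] := classic ((last p l).1 = b); last first.
  exists p, (rcons l (b, dir)); rewrite -rcons_cons; split; last split => //.
  - exact: walk_rcons hw (walk1 (conj hu hwe)).
  - exact: reduced_rcons.
move: hw hr; rewrite lastI => hw hr.
have [mid [h1 /walk_consE [[e1 _] /walk_nilE e2]]] := walk_rconsE hw.
move: e1 e2; case: (last p l) hl => b' d /= -> e1 e2.
have [ewm|->] : w = mid \/ w = u; last by [].
  by case: d dir e1 e2 hu hwe => [] [] /= e1 e2 e3 e4; subst; auto.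
rewrite ewm in hwc *; clear hw; case: l h1 hr => [|q l'] /= h1 hr.
  by case: hwc; rewrite (walk_nilE h1).
exists p, (belast q l'); do !split => //.
exact: (@reduced_belast p (last q l') (belast q l')).
Qed.
End Walks.

Section Tree.
Variable Q : quiver.
Hypothesis tree : is_tree Q.

Lemma tree_uniq (u w : vertex Q) l1 l2 :
  walk u w l1 -> reduced l1 -> walk u w l2 -> reduced l2 -> l1 = l2.
Proof.
move=> h1 r1 h2 r2; have [l [_ hu]] := tree u w.
by rewrite -(hu l1 (conj h1 r1)) -(hu l2 (conj h2 r2)).
Qed.

Lemma no_loop (a : arrow Q) : src a <> tgt a.
Proof.
move=> e; have h : walk (src a) (src a) [:: (a, true)] by apply: walk1.
by have := tree_uniq h I (walk_nil _) I.
Qed.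

Lemma branch_start c a dir (y : vertex Q) : joins a dir c y -> branch c a y.
Proof. by move=> h; exists (a, dir), [::]; do !split => //; apply: walk1. Qed.

Lemma branch_other c a a' dir (y : vertex Q) :
  joins a' dir c y -> a' <> a -> ~ branch c a y.
Proof.
move=> /walk1 h1 na [p [l [hw [hr ha]]]].
by case: (tree_uniq hw hr h1 I) => hp _; apply: na; rewrite -ha hp.
Qed.
End Tree.

Section Pieces.
Variables (K : fieldType) (Q : quiver) (M : rep K Q).
Local Notation d := (rdim M).

Definition restrict (P : vertex Q -> Prop) (U : Defs.family M) : Defs.family M :=
  fun v => if excluded_middle_informative (P v) then U v else 0.

Lemma restrict_in P U v : P v -> restrict P U v = U v.
Proof. by rewrite /restrict; case: excluded_middle_informative. Qed.

Lemma restrict_out P U v : ~ P v -> restrict P U v = 0.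
Proof. by rewrite /restrict; case: excluded_middle_informative. Qed.

(* [P] is a union of connected components of the subquiver on [T]. *)
Definition closed_in (T P : vertex Q -> Prop) : Prop :=
  forall a, in_sub T a -> (P (src a) <-> P (tgt a)).

Lemma restrict_subpiece T U P :
  is_piece T U -> closed_in T P -> subpiece T U (restrict P U).
Proof.
move=> [Uout Ustab] clP; split; last first.
  move=> v; have [Pv|Pv] := classic (P v).
  - by rewrite restrict_in.
  - by rewrite restrict_out ?sub0mx.
split=> [v Tv|a Ta].
  have [Pv|Pv] := classic (P v); first by rewrite restrict_in //; apply: Uout.
  by rewrite restrict_out //; apply/eqmx0P.
have [Ps|Ps] := classic (P (src a)); last by rewrite restrict_out ?mul0mx ?sub0mx.
by rewrite !restrict_in //; [apply: Ustab | apply/(clP a Ta)].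
Qed.

Lemma indecomposable_split T U P :
  indecomposable_piece T U -> closed_in T P ->
  (forall v, P v -> (U v == (0 : 'M_(d v)))%MS) \/
  (forall v, ~ P v -> (U v == (0 : 'M_(d v)))%MS).
Proof.
move=> [Upiece [_ Uind]] clP.
have clnP : closed_in T (fun v => ~ P v).
  by move=> a Ta; split=> nP hP; apply: nP; apply/(clP a Ta).
have := Uind _ _ (restrict_subpiece Upiece clP) (restrict_subpiece Upiece clnP).
case=> [v|zP|znP].
- have [Pv|Pv] := classic (P v).
  + rewrite restrict_in // restrict_out // addsmx0_id capmx0.
    by split; apply/andP; split; rewrite ?submx_refl ?sub0mx.
  + rewrite restrict_out // restrict_in // adds0mx_id cap0mx.
    by split; apply/andP; split; rewrite ?submx_refl ?sub0mx.
- by left=> v Pv; move: (zP v); rewrite restrict_in.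
- by right=> v Pv; move: (znP v); rewrite restrict_in.
Qed.

Lemma indecomposable_one_arrow (tree : is_tree Q) T c (N : Defs.family M)
    a1 a2 dir1 dir2 (y1 y2 : vertex Q) :
  indecomposable_piece (remove_vertex T c) N ->
  joins a1 dir1 c y1 -> joins a2 dir2 c y2 ->
  ~~ (N y1 == (0 : 'M_(d y1)))%MS -> ~~ (N y2 == (0 : 'M_(d y2)))%MS -> a1 = a2.
Proof.
move=> Nind j1 j2 nz1 nz2; apply: NNPP => a12.
have clB : closed_in (remove_vertex T c) (branch c a1).
  move=> b [[_ hs] [_ ht]]; split=> h.
  - exact: (@branch_step _ c a1 _ _ b true h (conj erefl erefl) ht).
  - exact: (@branch_step _ c a1 _ _ b false h (conj erefl erefl) hs).
case: (indecomposable_split Nind clB) => [z|z].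
- by move: nz1; rewrite z //; apply: branch_start j1.
- by move: nz2; rewrite z //; apply: branch_other j2 (nesym a12).
Qed.
End Pieces.

Section LinearAlgebra.
Variable F : fieldType.

Lemma ker_to_coker m n (X : 'M[F]_(m, n)) :
  ~~ row_free X -> ~~ row_full X -> exists g : 'M_(m, n), ~~ (kermx X *m g <= X)%MS.
Proof.
move=> nfree nfull.
have /row_subPn [i] : ~~ (kermx X <= (0 : 'M_m))%MS by rewrite submx0 kermx_eq0.
rewrite submx0 => ki_nz.
have /row_subPn [j vj_out] : ~~ (1%:M <= X)%MS by rewrite sub1mx.
have /row_freeP [k' kk'] : row_free (row i (kermx X)) by rewrite /row_free rank_rV ki_nz.
exists (k' *m row j 1%:M); apply: contra vj_out => kerX.
have <- : row i (kermx X) *m (k' *m row j 1%:M) = row j 1%:M.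
  by rewrite mulmxA kk' mul1mx.
exact: submx_trans (submxMr _ (row_sub i _)) kerX.
Qed.

Lemma eqmx0_rank m n (X : 'M[F]_(m, n)) : (X == (0 : 'M_n))%MS = (\rank X == 0%N).
Proof. by rewrite sub0mx andbT submx0 mxrank_eq0. Qed.

Lemma rank1_eqmx m1 m2 n (X : 'M[F]_(m1, n)) (Y : 'M_(m2, n)) :
  (X <= Y)%MS -> ~~ (X == (0 : 'M_n))%MS -> \rank Y = 1%N -> (X == Y)%MS.
Proof.
move=> XY nz rY; rewrite -(mxrank_leqif_eq XY).2 rY eqn_leq -{1}rY.
by rewrite mxrankS //= lt0n mxrank_eq0; apply: contra nz => /eqP ->; apply/eqmx0P.
Qed.

Lemma nonzero_summand (I : finType) n (X : I -> 'M[F]_n) :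
  ~~ ((\sum_i X i)%MS == (0 : 'M_n))%MS -> exists i, ~~ (X i == (0 : 'M_n))%MS.
Proof.
move=> nz; apply: NNPP => none; apply: (negP nz).
apply/eqmx0P/eqP; rewrite -submx0; apply/sumsmx_subP => i _.
by case: (boolP (X i == (0 : 'M_n))%MS) => [/andP[]|nzi] //; case: none; exists i.
Qed.

Lemma mxdirect_component (I : finType) n (X : I -> 'M[F]_n) j (x w : 'rV_n) :
  mxdirect (\sum_i X i) -> (x <= X j)%MS -> (w <= X j)%MS ->
  (x - w <= \sum_(k | k != j) X k)%MS -> x = w.
Proof.
move=> /mxdirect_sumsP dirX xX wX xw; apply/eqP; rewrite -subr_eq0 -submx0.
rewrite -(dirX j isT) sub_capmx xw andbT.
by apply: addmx_sub xX _; rewrite eqmx_opp.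
Qed.

Lemma mxdirect_onto (I : finType) m n (A : 'M[F]_(m, n)) (X : I -> 'M_m)
    (Y : I -> 'M_n) :
  row_free A -> mxdirect (\sum_i X i) -> mxdirect (\sum_i Y i) ->
  (forall i, (X i *m A <= Y i)%MS) -> \rank (\sum_i X i) = \rank (\sum_i Y i) ->
  forall i, (X i *m A == Y i)%MS.
Proof.
move=> freeA dirX dirY XAY rXY.
have le_i i : true -> _ := fun _ => mxrank_leqif_eq (XAY i).
suff /forall_inP allXY : [forall (i | true), (X i *m A == Y i)%MS].
  by move=> i; apply: allXY.
rewrite -(leqif_sum le_i).2.
have -> : (\sum_i \rank (X i *m A))%N = (\sum_i \rank (X i))%N.
  by apply: eq_bigr => i _; rewrite mxrankMfree.
by rewrite -(mxdirectP dirX) -(mxdirectP dirY) rXY.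
Qed.
End LinearAlgebra.

Section Exceptional.
Variables (K : fieldType) (Q : quiver) (M : rep K Q).
Local Notation d := (rdim M).
Local Notation A := (rmap M).

(* Ext^1(M, M) = 0 forces every arrow map to be injective or surjective:
   otherwise a map [G a] carrying kernel to cokernel is no coboundary. *)
Lemma ext1_zero_inj_or_surj :
  ext1_self_zero M -> forall a, row_free (A a) \/ row_full (A a).
Proof.
move=> hext a; have [|nfree] := boolP (row_free (A a)); first by left.
have [|nfull] := boolP (row_full (A a)); first by right.
have witness b : exists g, ~~ row_free (A b) -> ~~ row_full (A b) ->
    ~~ (kermx (A b) *m g <= A b)%MS.
  have [fb|nfb] := boolP (row_free (A b)); first by exists 0.
  have [Fb|nFb] := boolP (row_full (A b)); first by exists 0.
  by have [g hg] := ker_to_coker nfb nFb; exists g.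
pose G b := proj1_sig (constructive_indefinite_description _ (witness b)).
have [F hF] := hext G.
have := proj2_sig (constructive_indefinite_description _ (witness a)) nfree nfull.
rewrite -/(G a) hF mulmxBr mulmxA mulmx_ker mul0mx sub0r mulmxA -mulNmx.
by rewrite submxMl.
Qed.

Lemma ext1_zero_square_free a :
  ext1_self_zero M -> d (src a) = d (tgt a) -> row_free (A a).
Proof.
move=> hext hd; case: (ext1_zero_inj_or_surj hext a) => // full.
by rewrite /row_free (eqP full) hd.
Qed.
End Exceptional.

Section RadiationBasics.
Variables (K : fieldType) (Q : quiver) (M : rep K Q).
Local Notation d := (rdim M).
Local Notation ex v u := (existT (fun w : vertex Q => 'rV[K]_(d w)) v u).

Lemma elt_vertex v w (u : 'rV[K]_(d v)) (u' : 'rV[K]_(d w)) : ex v u = ex w u' -> v = w.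
Proof. by move=> e; have := f_equal (@projT1 _ _) e. Qed.

Lemma elt_inj v (u u' : 'rV[K]_(d v)) : ex v u = ex v u' -> u = u'.
Proof. exact: inj_pair2. Qed.

Lemma union_off_center (B : elt M -> Prop) (I : Type) (Bs : I -> elt M -> Prop)
    c (b : 'rV[K]_(d c)) v (u : 'rV[K]_(d v)) :
  (forall p, B p <-> p = ex c b \/ exists i, Bs i p) -> v <> c ->
  B (ex v u) <-> exists i, Bs i (ex v u).
Proof.
move=> hB vc; rewrite hB; split; last by right.
by case=> // /elt_vertex.
Qed.

Lemma rb_elems T U c b B : @rad_basis K Q M T U c b B ->
  forall v u, B (ex v u) -> u != 0 /\ (u <= U v)%MS.
Proof.
elim=> {T U c b B} [T U c b B _ _ _ _ bn0 bU hB
  | T U c b B n N al bs Bs _ _ _ _ bn0 bU Np Nsum _ _ _ _ IH hB] v u /hB.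
  by move=> e; have ev := elt_vertex e; subst v; rewrite (elt_inj e).
case=> [e|[i /IH [un0 uN]]]; first by have ev := elt_vertex e; subst v; rewrite (elt_inj e).
split=> //; have [Rv|nRv] := classic (remove_vertex T c v).
  have [/andP [NU _] _] := Nsum v Rv.
  exact: submx_trans uN (submx_trans (sumsmx_sup i _ (submx_refl _)) NU).
by move/eqmx0P: ((Np i).1 v nRv) uN => ->; rewrite submx0 (negbTE un0).
Qed.

Lemma rb_support T U c b B v u : @rad_basis K Q M T U c b B ->
  B (ex v u) -> ~~ (U v == (0 : 'M_(d v)))%MS.
Proof.
move=> RB /(rb_elems RB) [un0 uU]; apply: contra un0 => /eqmx0P Uv0.
by move: uU; rewrite Uv0 submx0.
Qed.

Lemma rb_rank T U c b B : @rad_basis K Q M T U c b B -> \rank (U c) = 1%N.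
Proof. by case. Qed.

Lemma rb_center_nonzero T U c b B : @rad_basis K Q M T U c b B ->
  ~~ (U c == (0 : 'M_(d c)))%MS.
Proof. by move/rb_rank => rk; rewrite eqmx0_rank rk. Qed.

Lemma rb_center T U c b B : @rad_basis K Q M T U c b B ->
  forall u, B (ex c u) <-> u = b.
Proof.
case=> {T U c b B} [T U c b B _ _ _ _ _ _ hB
  | T U c b B n N al bs Bs _ _ _ _ _ _ Np _ _ _ _ Nrb hB] u.
  by rewrite hB; split=> [/elt_inj|->].
rewrite hB; split=> [[/elt_inj //|[i /(rb_support (Nrb i))]]|->]; last by left.
by rewrite ((Np i).1 c (fun h => h.2 erefl)).
Qed.
End RadiationBasics.

Section Transport.
Variables (K : fieldType) (Q : quiver) (M : rep K Q).
Local Notation d := (rdim M).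
Local Notation ex v u := (existT (fun w : vertex Q => 'rV[K]_(d w)) v u).
Hypothesis tree : is_tree Q.
Variable al : arrow Q.
Local Notation s := (src al).
Local Notation t := (tgt al).
Local Notation A := (rmap M al).
Hypothesis freeA : row_free A.

Definition carried (B : elt M -> Prop) : Prop :=
  (forall u, B (ex s u) -> B (ex t (u *m A))) /\
  (forall w, B (ex t w) -> exists2 u, B (ex s u) & w = u *m A).

Lemma carried_union (I : Type) (B : elt M -> Prop) (Bs : I -> elt M -> Prop) :
  (forall u, B (ex s u) <-> exists i, Bs i (ex s u)) ->
  (forall w, B (ex t w) <-> exists i, Bs i (ex t w)) ->
  (forall i, carried (Bs i)) -> carried B.
Proof.
move=> Bs_s Bs_t carriedBs; split.
  by move=> u /Bs_s [i /(carriedBs i).1 hi]; apply/Bs_t; exists i.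
move=> w /Bs_t [i /(carriedBs i).2 [u hu ->]].
by exists u => //; apply/Bs_s; exists i.
Qed.

Lemma rank_carried (X : 'M_(d s)) (Y : 'M_(d t)) :
  (X *m A == Y)%MS -> \rank X = \rank Y.
Proof. by move/eqmx_rank; rewrite mxrankMfree. Qed.

(* If the module vanishes at [s] or at [t] (hence, ranks being preserved, at
   both), its basis has no vector at [s] nor at [t]. *)
Lemma rb_carried_zero T U c b B : @rad_basis K Q M T U c b B ->
  (U s *m A == U t)%MS ->
  (U s == (0 : 'M_(d s)))%MS \/ (U t == (0 : 'M_(d t)))%MS -> carried B.
Proof.
move=> RB UA Uz.
have rk0 : \rank (U s) = 0%N /\ \rank (U t) = 0%N.
  case: Uz => /eqmx0P U0.
  - by rewrite -(rank_carried UA) U0 mxrank0.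
  - by rewrite (rank_carried UA) U0 mxrank0.
have noB v u : \rank (U v) = 0%N -> ~ B (ex v u).
  by move=> rk /(rb_support RB); rewrite eqmx0_rank rk.
by split=> [u /(noB _ _ rk0.1)|w /(noB _ _ rk0.2)].
Qed.

(* Both ends of [al] away from the centre: the branches are carried
   individually, since [al] maps each summand into its counterpart and a
   dimension count forces equality. *)
Lemma carried_summands n (B : elt M -> Prop) (Bs : 'I_n -> elt M -> Prop)
    (U : Defs.family M) (N : 'I_n -> Defs.family M) :
  (forall u, B (ex s u) <-> exists j, Bs j (ex s u)) ->
  (forall w, B (ex t w) <-> exists j, Bs j (ex t w)) ->
  (\sum_j N j s == U s)%MS /\ mxdirect (\sum_j N j s) ->
  (\sum_j N j t == U t)%MS /\ mxdirect (\sum_j N j t) ->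
  (forall j, (N j s *m A <= N j t)%MS) -> (U s *m A == U t)%MS ->
  (forall j, (N j s *m A == N j t)%MS -> carried (Bs j)) -> carried B.
Proof.
move=> Bs_s Bs_t [sumS dirS] [sumT dirT] NA UA IH.
apply: carried_union Bs_s Bs_t _ => j; apply: IH.
apply: mxdirect_onto freeA dirS dirT NA _ j.
by rewrite (eqmx_rank sumS) (eqmx_rank sumT) (rank_carried UA).
Qed.

(* [al] leaves the centre [c = s]: [b] is sent to the vector [b_i] of the
   unique branch through [t], which then is the basis vector at [t]. *)
Lemma center_src_carried T U c b B : @rad_basis K Q M T U c b B ->
  src al = c -> (U s *m A == U t)%MS -> carried B.
Proof.
case=> {T U c b B} [T U c b B Tc Up rk Uz bn0 bU hB
  | T U c b B n N al0 bs Bs Tc Uind rk ex2 bn0 bU Np Nsum Nind Nhom Nal Nrb hB] es UA.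
  apply: rb_carried_zero (rad_simple Tc Up rk Uz bn0 bU hB) UA _.
  by right; apply: Uz; rewrite -es; apply: nesym (no_loop tree (a:=al)).
have RB := rad_step Tc Uind rk ex2 bn0 bU Np Nsum Nind Nhom Nal Nrb hB.
subst c; have ts : t <> s := nesym (no_loop tree (a:=al)).
have [Tt|nTt] := classic (T t); last first.
  by apply: rb_carried_zero RB UA _; right; apply: Uind.1.1.
have [sumT dirT] := Nsum t (conj Tt ts).
have rkt : \rank (U t) = 1%N by rewrite -(rank_carried UA).
have bAU : (b *m A <= U t)%MS by case/andP: UA => UAt _; apply: submx_trans UAt; apply: submxMr.
have branch_t j : ~~ (N j t == (0 : 'M_(d t)))%MS -> forall w, Bs j (ex t w) <-> w = b *m A.
  move=> nz; have ej : al0 j = al.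
    have [dj jj] : exists dj, joins (al0 j) dj s (projT1 (bs j)).
      by case: (Nal j) => -[e [u [_ [w [<- _]]]]]; [exists true | exists false].
    exact: (indecomposable_one_arrow tree (Nind j) jj (conj erefl erefl : joins al true s t)
      (rb_center_nonzero (Nrb j)) nz).
  move: (Nal j) (Nrb j); rewrite ej => -[[_ [u [/elt_inj -> [w [<- [wN wc]]]]]] | [/ts //]].
  move=> /= rbj w'; rewrite (rb_center rbj); suff -> : w = b *m A by [].
  have /andP [_ UN] : (N j t == U t)%MS.
    by apply: rank1_eqmx nz rkt; apply: submx_trans (proj1 (andP sumT)); apply: sumsmx_sup.
  by apply/esym/(mxdirect_component dirT _ wN wc); apply: submx_trans UN.
split=> [u /(rb_center RB) ->|w /(union_off_center _ hB ts) [j hj]].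
  have [j nz] : exists j, ~~ (N j t == (0 : 'M_(d t)))%MS.
    by apply: nonzero_summand; rewrite eqmx0_rank (eqmx_rank sumT) rkt.
  by apply/(union_off_center _ hB ts); exists j; apply/(branch_t j nz).
exists b; first exact/(rb_center RB).
exact/(branch_t j (rb_support (Nrb j) hj)).
Qed.

(* [al] enters the centre [c = t]: the basis vector at [s] is the vector
   [b_i] of the unique branch through [s], and it is sent to [b]. *)
Lemma center_tgt_carried T U c b B : @rad_basis K Q M T U c b B ->
  tgt al = c -> (U s *m A == U t)%MS -> carried B.
Proof.
case=> {T U c b B} [T U c b B Tc Up rk Uz bn0 bU hB
  | T U c b B n N al0 bs Bs Tc Uind rk ex2 bn0 bU Np Nsum Nind Nhom Nal Nrb hB] et UA.
  apply: rb_carried_zero (rad_simple Tc Up rk Uz bn0 bU hB) UA _.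
  by left; apply: Uz; rewrite -et; exact: (no_loop tree (a:=al)).
have RB := rad_step Tc Uind rk ex2 bn0 bU Np Nsum Nind Nhom Nal Nrb hB.
subst c; have st : s <> t := no_loop tree (a:=al).
have [Ts|nTs] := classic (T s); last first.
  by apply: rb_carried_zero RB UA _; left; apply: Uind.1.1.
have [sumS dirS] := Nsum s (conj Ts st).
have rks : \rank (U s) = 1%N by rewrite (rank_carried UA).
have branch_s j : ~~ (N j s == (0 : 'M_(d s)))%MS ->
    exists2 w, w *m A = b & forall w', Bs j (ex s w') <-> w' = w.
  move=> nz; have ej : al0 j = al.
    have [dj jj] : exists dj, joins (al0 j) dj t (projT1 (bs j)).
      by case: (Nal j) => -[e [u [_ [w [<- _]]]]]; [exists true | exists false].
    exact: (indecomposable_one_arrow tree (Nind j) jj (conj erefl erefl : joins al false t s)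
      (rb_center_nonzero (Nrb j)) nz).
  move: (Nal j) (Nrb j); rewrite ej => -[[/st []] | [_ [u [/elt_inj -> [w [<- [_ [wA _]]]]]]]].
  by move=> /= rbj; exists w => // w'; apply: rb_center rbj w'.
split=> [u /(union_off_center _ hB st) [j hj]|_ /(rb_center RB) ->].
  have [w wA hw] := branch_s j (rb_support (Nrb j) hj).
  by move/hw: hj => ->; rewrite wA; apply/(rb_center RB).
have [j nz] : exists j, ~~ (N j s == (0 : 'M_(d s)))%MS.
  by apply: nonzero_summand; rewrite eqmx0_rank (eqmx_rank sumS) rks.
have [wj wA hw] := branch_s j nz; exists wj; last by rewrite wA.
by apply/(union_off_center _ hB st); exists j; apply/hw.
Qed.

Lemma rb_carried T U c b B : @rad_basis K Q M T U c b B ->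
  (U s *m A == U t)%MS -> carried B.
Proof.
elim=> {T U c b B} [T U c b B Tc Up rk Uz bn0 bU hB
  | T U c b B n N al0 bs Bs Tc Uind rk ex2 bn0 bU Np Nsum Nind Nhom Nal Nrb IH hB] UA.
  have RB := rad_simple Tc Up rk Uz bn0 bU hB.
  have [es|sc] := classic (src al = c); first exact: center_src_carried RB es UA.
  by apply: rb_carried_zero RB UA _; left; apply: Uz.
have RB := rad_step Tc Uind rk ex2 bn0 bU Np Nsum Nind Nhom Nal Nrb hB.
have [es|sc] := classic (src al = c); first exact: center_src_carried RB es UA.
have [et|tc] := classic (tgt al = c); first exact: center_tgt_carried RB et UA.
have [Ts|nTs] := classic (T s); last by apply: rb_carried_zero RB UA _; left; apply: Uind.1.1.
have [Tt|nTt] := classic (T t); last by apply: rb_carried_zero RB UA _; right; apply: Uind.1.1.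
apply: (carried_summands (fun u => union_off_center _ hB sc) (fun w => union_off_center _ hB tc)
  (Nsum s (conj Ts sc)) (Nsum t (conj Tt tc)) _ UA IH).
by move=> j; apply: (Np j).2.
Qed.
End Transport.

Section BasisSequences.
Variable F : fieldType.

Definition mx_of_seq n (l : seq 'rV[F]_n) : 'M_(size l, n) :=
  \matrix_(i < size l) nth 0 l i.

Lemma mx_of_seq_row n (l : seq 'rV[F]_n) u :
  (exists i, row i (mx_of_seq l) = u) <-> u \in l.
Proof.
split=> [[i <-]|ul]; first by rewrite rowK mem_nth.
have ul' : (index u l < size l)%N by rewrite index_mem.
by exists (Ordinal ul'); rewrite rowK nth_index.
Qed.

Lemma mx_of_seq_sub n (l : seq 'rV[F]_n) m (X : 'M_(m, n)) :
  (mx_of_seq l <= X)%MS = all (fun u => u <= X)%MS l.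
Proof.
apply/row_subP/allP => [sub u /mx_of_seq_row [i <-] | sub i]; first exact: sub.
by apply: sub; apply/mx_of_seq_row; exists i.
Qed.

Lemma mem_mx_of_seq n (l : seq 'rV[F]_n) u : u \in l -> (u <= mx_of_seq l)%MS.
Proof. by move/mx_of_seq_row => [i <-]; apply: row_sub. Qed.

Definition basis_seq n (X : 'M[F]_n) (l : seq 'rV_n) : Prop :=
  row_free (mx_of_seq l) /\ (mx_of_seq l == X)%MS.

Lemma basis_seq_nil n (X : 'M[F]_n) : (X == (0 : 'M_n))%MS -> basis_seq X [::].
Proof.
move=> X0; split; first by rewrite /row_free -leqn0 rank_leq_row.
rewrite /(_ == _)%MS mx_of_seq_sub /=.
by case/andP: X0 => X0 _; apply: submx_trans X0 (sub0mx _ _).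
Qed.

Lemma basis_seq_line n (X : 'M[F]_n) (b : 'rV_n) :
  b != 0 -> (b <= X)%MS -> \rank X = 1%N -> basis_seq X [:: b].
Proof.
move=> b_nz bX rkX.
have bM : (b <= mx_of_seq [:: b])%MS by apply: mem_mx_of_seq; rewrite inE.
have MX : (mx_of_seq [:: b] <= X)%MS by rewrite mx_of_seq_sub /= bX.
have rkM : \rank (mx_of_seq [:: b]) = 1%N.
  apply/eqP; rewrite eqn_leq rank_leq_row /=.
  by have := mxrankS bM; rewrite rank_rV b_nz.
split; first by rewrite /row_free rkM.
by apply: rank1_eqmx MX _ rkX; rewrite eqmx0_rank rkM.
Qed.

Lemma basis_seq_flatten (I : finType) n (X : I -> 'M[F]_n) (Y : 'M_n)
    (ls : I -> seq 'rV_n) :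
  (\sum_i X i == Y)%MS -> mxdirect (\sum_i X i) -> (forall i, basis_seq (X i) (ls i)) ->
  basis_seq Y (flatten [seq ls i | i <- enum I]).
Proof.
move=> /andP [sumY Ysum] dirX basis_ls.
set fl := flatten _.
have mem_fl u : u \in fl <-> exists i, u \in ls i.
  split=> [/flattenP [s0 /mapP [i _ ->] us]|[i ui]]; first by exists i.
  by apply/flattenP; exists (ls i) => //; apply/mapP; exists i; rewrite ?mem_enum.
have eqY : (mx_of_seq fl == Y)%MS.
  apply/andP; split.
    rewrite mx_of_seq_sub; apply/allP => u /mem_fl [i /mem_mx_of_seq ui].
    case/andP: (basis_ls i).2 => lsX _; apply: submx_trans sumY.
    by apply: sumsmx_sup (submx_trans ui lsX).
  apply: submx_trans Ysum _; apply/sumsmx_subP => i _.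
  case/andP: (basis_ls i).2 => _ Xls; apply: submx_trans Xls _.
  by rewrite mx_of_seq_sub; apply/allP => u ui; apply: mem_mx_of_seq; apply/mem_fl; exists i.
split=> //; rewrite /row_free (eqmx_rank eqY) -(eqmx_rank (introT andP (conj sumY Ysum))).
rewrite (mxdirectP dirX) /= size_flatten sumnE /shape -map_comp big_map big_enum /=.
apply/eqP/eq_bigr => i _; case: (basis_ls i) => /eqnP free_i /eqmx_rank <-.
by rewrite free_i.
Qed.
End BasisSequences.

Section RadiationBases.
Variables (K : fieldType) (Q : quiver) (M : rep K Q).
Local Notation d := (rdim M).
Local Notation ex v u := (existT (fun w : vertex Q => 'rV[K]_(d w)) v u).

Definition lists_basis (B : elt M -> Prop) v (X : 'M[K]_(d v)) : Prop :=
  exists l, basis_seq X l /\ forall u, B (ex v u) <-> u \in l.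

Lemma rb_lists_center T U c b B : @rad_basis K Q M T U c b B -> lists_basis B (U c).
Proof.
move=> RB; have Bb : B (ex c b) by apply/(rb_center RB).
have [b_nz bU] := rb_elems RB Bb.
exists [:: b]; split; first exact: basis_seq_line b_nz bU (rb_rank RB).
by move=> u; rewrite (rb_center RB) inE; split=> [->|/eqP].
Qed.

Lemma rb_lists_zero T U c b B v : @rad_basis K Q M T U c b B ->
  (U v == (0 : 'M_(d v)))%MS -> lists_basis B (U v).
Proof.
move=> RB Uv0; exists [::]; split; first exact: basis_seq_nil.
by move=> u; rewrite in_nil; split=> // /(rb_support RB); rewrite Uv0.
Qed.

Lemma rb_lists_basis T U c b B : @rad_basis K Q M T U c b B ->
  forall v, lists_basis B (U v).
Proof.
elim=> {T U c b B} [T U c b B Tc Up rk Uz bn0 bU hB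
  | T U c b B n N al0 bs Bs Tc Uind rk ex2 bn0 bU Np Nsum Nind Nhom Nal Nrb IH hB] v.
  have RB := rad_simple Tc Up rk Uz bn0 bU hB.
  have [->|vc] := classic (v = c); first exact: rb_lists_center RB.
  exact: rb_lists_zero RB (Uz v vc).
have RB := rad_step Tc Uind rk ex2 bn0 bU Np Nsum Nind Nhom Nal Nrb hB.
have [->|vc] := classic (v = c); first exact: rb_lists_center RB.
have [Tv|nTv] := classic (T v); last exact: rb_lists_zero RB (Uind.1.1 v nTv).
have [sumV dirV] := Nsum v (conj Tv vc).
pose ls j := proj1_sig (constructive_indefinite_description _ (IH j v)).
have [ls_basis ls_mem] : (forall j, basis_seq (N j v) (ls j)) /\
    (forall j u, Bs j (ex v u) <-> u \in ls j).
  by split=> j; case: (proj2_sig (constructive_indefinite_description _ (IH j v))).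
exists (flatten [seq ls j | j <- enum 'I_n]).
split; first exact: basis_seq_flatten sumV dirV ls_basis.
move=> u; rewrite (union_off_center _ hB vc); split=> [[j /ls_mem uj]|/flattenP [l]].
  by apply/flattenP; exists (ls j) => //; apply/mapP; exists j; rewrite ?mem_enum.
by move=> /mapP [j _ ->] /ls_mem uj; exists j.
Qed.
End RadiationBases.

Lemma ordered_basis_carried (K : fieldType) (Q : quiver) (M : rep K Q) (al : arrow Q)
    (B : elt M -> Prop) n (E : 'M[K]_(n, rdim M (src al))) :
  row_free (rmap M al) -> rdim M (src al) = rdim M (tgt al) -> carried al B ->
  ordered_basis_of M B (src al) E -> ordered_basis_of M B (tgt al) (E *m rmap M al).
Proof.
move=> freeA hd [fwd bwd] [Efree [Efull Emem]].
split; first by rewrite /row_free mxrankMfree.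
split; first by rewrite /row_full mxrankMfree // -hd.
move=> w; split=> [/bwd [u /Emem [i <-] ->]|[i <-]].
  by exists i; rewrite row_mul.
by rewrite row_mul; apply: fwd; apply/Emem; exists i.
Qed.

Theorem corollary2 (K : fieldType) (Q : quiver) (M : rep K Q)
    (x : vertex Q) (B : elt M -> Prop) :
  is_tree Q -> locally_finite Q -> finite_dim M ->
  exceptional M -> radiation_basis M x B ->
  forall al : arrow Q, rdim M (src al) = rdim M (tgt al) ->
  exists (n : nat) (Ey : 'M[K]_(n, rdim M (src al))) (Ez : 'M[K]_(n, rdim M (tgt al))),
    ordered_basis_of M B (src al) Ey /\ ordered_basis_of M B (tgt al) Ez /\ Ey *m rmap M al = Ez.
Proof.
move=> tree _ _ [_ hext] [b RB] al hd.
have freeA := ext1_zero_square_free hext hd.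
have UA : (full_family M (src al) *m rmap M al == full_family M (tgt al))%MS.
  by rewrite /full_family mul1mx submx1 sub1mx /= /row_full (eqP freeA) hd.
have [l [[lfree lfull] lmem]] := rb_lists_basis RB (src al).
have Ey : ordered_basis_of M B (src al) (mx_of_seq l).
  split=> //; split; first by rewrite -sub1mx; case/andP: lfull.
  by move=> u; rewrite lmem; apply: iff_sym; apply: mx_of_seq_row.
exists (size l), (mx_of_seq l), (mx_of_seq l *m rmap M al); split=> //; split=> //.
exact: ordered_basis_carried freeA hd (rb_carried tree freeA RB UA) Ey.
Qed.
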